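(* For all non-negative integers $n$ and $p$, $$\begin{aligned}\sum_{k=1}^n\frac{k}{2^{2k}}\binom{2(k+p)}{k+p}\binom{k+p}{k}\left(O_{k+p}-O_p\right)&=\frac{n}{2^{2n}}\binom{2(p+1)}{p+1}^{-1}\binom{2p}{p}\binom{2(n+p+1)}{n+p+1}\binom{n+p+1}{n}\left(O_{n+p+1}-O_{p+1}\right)\\&\quad-\frac{1}{2^{2n-2}}\binom{2(p+2)}{p+2}^{-1}\binom{2p}{p}\binom{2(n+p+1)}{n+p+1}\binom{n+p+1}{n-1}\left(O_{n+p+1}-O_{p+2}\right).\end{aligned}$$ In particular, $\sum_{k=1}^n\frac{k}{2^{2k}}\binom{2k}{k}O_k=\frac{n(n+1)}{2^{2n+1}}\binom{2(n+1)}{n+1}(O_{n+1}-1)-\frac{n(n+1)}{3\cdot2^{2n}}\binom{2(n+1)}{n+1}\left(O_{n+1}-\frac43\right)$.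
   Context: The odd harmonic numbers are $O_n=\sum_{k=1}^n\frac{1}{2k-1}$, $O_0=0$. Binomial coefficients $\binom{a}{-1}$ are $0$. *)

From mathcomp Require Import all_boot all_order all_algebra.
Set Implicit Arguments. Unset Strict Implicit. Unset Printing Implicit Defensive.
Import Order.TTheory GRing.Theory Num.Theory.
Local Open Scope ring_scope.

Definition oddH (n : nat) : rat :=
  \sum_(1 <= k < n.+1) ((2 * k - 1)%N%:R)^-1.

Definition binomZ (a : nat) (k : int) : nat :=
  match k with Posz k' => 'C(a, k') | Negz _ => 0%N end.

From mathcomp Require Import all_boot all_order all_algebra.
From mathcomp Require Import zify ring lra.
Import Order.TTheory GRing.Theory Num.Theory.
Local Open Scope ring_scope.

(* The right-hand side is a closed form F p n whose forward difference is the
   summand, so the identity telescopes.  Since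
   binom_weight p (k+1) / binom_weight p k = 2 (2(k+p)+1) / (k+1) and
   O_(m+1) - O_m = 1 / (2m+1), checking F p (n+1) - F p n is an identity of
   rational functions in n and p.  The special case is p = 0, where
   O_1 = 1 and O_2 = 4/3. *)

Lemma oddH0 : oddH 0 = 0.
Proof. by rewrite /oddH big_geq. Qed.

Lemma oddHS n : oddH n.+1 = oddH n + ((2 * n).+1%:R)^-1.
Proof. by rewrite /oddH big_nat_recr //=; congr (_ + (_%:R)^-1); lia. Qed.

Lemma mul_bin_central m :
  (m.+1 * 'C(2 * m.+1, m.+1) = 2 * (2 * m).+1 * 'C(2 * m, m))%N.
Proof.
have e : (2 * m.+1).-1 = (2 * m).+1 by lia.
have bin_sym : 'C((2 * m).+1, m.+1) = 'C((2 * m).+1, m).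
  rewrite -[in RHS](@bin_sub (2 * m).+1 m); last by lia.
  by congr 'C(_, _); lia.
have := mul_bin_diag (2 * m.+1) m; rewrite e => <-.
by rewrite -[RHS]mulnA mul_bin_diag bin_sym mulnA.
Qed.

Section BinomialRatios.
Variable R : numFieldType.

Lemma bin_central_ratrS m :
  'C(2 * m.+1, m.+1)%:R = 2 * (2 * m).+1%:R / m.+1%:R * 'C(2 * m, m)%:R :> R.
Proof.
have /(congr1 (fun k => k%:R : R)) := mul_bin_central m.
rewrite !natrM => h; apply: (mulfI (lt0r_neq0 (ltr0Sn R m))).
by rewrite h; field; rewrite nat1r pnatr_eq0.
Qed.

Lemma binSS_ratr n k : 'C(n.+1, k.+1)%:R = n.+1%:R / k.+1%:R * 'C(n, k)%:R :> R.
Proof.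
have /(congr1 (fun i => i%:R : R)) := mul_bin_diag n.+1 k.
rewrite !natrM => h; apply: (mulfI (lt0r_neq0 (ltr0Sn R k))).
by rewrite -h; field; rewrite nat1r pnatr_eq0.
Qed.

Lemma bin_ratr_shift n k :
  (k < n)%N -> 'C(n, k)%:R = k.+1%:R / (n - k)%:R * 'C(n, k.+1)%:R :> R.
Proof.
move=> lt_kn; have nk0 : (n - k)%:R != 0 :> R by rewrite pnatr_eq0; lia.
have /(congr1 (fun i => i%:R : R)) := mul_bin_left n k.
by rewrite !natrM => h; apply: (mulfI nk0); rewrite -h; field.
Qed.

End BinomialRatios.

Definition binom_weight (p k : nat) : rat :=
  ('C(2 * (k + p), k + p) * 'C(k + p, k))%N%:R.

Lemma binom_weightS p k :
  binom_weight p k.+1 = 2 * (2 * (k + p)).+1%:R / k.+1%:R * binom_weight p k.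
Proof.
rewrite /binom_weight addSn !natrM bin_central_ratrS binSS_ratr.
have := ler0n rat k; have := ler0n rat p.
by move=> *; field; rewrite !lt0r_neq0 //; lra.
Qed.

(* The theorem's right-hand side, with every binomial expressed through
   binom_weight p n.+1. *)
Definition weighted_sum_closed (p n : nat) : rat :=
  (n * n.+1)%N%:R / 2 ^+ (2 * n) * binom_weight p n.+1
  * ((oddH (n + p).+1 - oddH p.+1) / (2 * (2 * p).+1%:R)
     - (oddH (n + p).+1 - oddH p.+2) / ((2 * p).+1%:R * (2 * p.+1).+1%:R)).

Lemma weighted_sum_closedS p n :
  weighted_sum_closed p n.+1 = weighted_sum_closed p n
    + n.+1%:R / 2 ^+ (2 * n.+1) * binom_weight p n.+1 * (oddH (n.+1 + p) - oddH p).
Proof.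
rewrite /weighted_sum_closed !binom_weightS addSn !oddHS [(2 * n.+1)%N]mulnS exprD.
have t0 : 2 ^+ (2 * n) != 0 :> rat by rewrite expf_neq0.
have := ler0n rat n; have := ler0n rat p.
by move=> *; field; rewrite t0 !lt0r_neq0 //; lra.
Qed.

Lemma sum_binom_weight_oddH p n :
  \sum_(1 <= k < n.+1) (k%:R / 2 ^+ (2 * k) * binom_weight p k * (oddH (k + p) - oddH p))
  = weighted_sum_closed p n.
Proof.
elim: n => [|n IH]; first by rewrite big_geq // /weighted_sum_closed !mul0r.
by rewrite big_nat_recr //= IH weighted_sum_closedS.
Qed.

Lemma weighted_sum_closed_binomials p m :
  weighted_sum_closed p m.+1
  = m.+1%:R / 2 ^+ (2 * m.+1) * ('C(2 * p.+1, p.+1)%:R)^-1 * 'C(2 * p, p)%:R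
      * ('C(2 * (m.+1 + p).+1, (m.+1 + p).+1) * 'C((m.+1 + p).+1, m.+1))%N%:R
      * (oddH (m.+1 + p).+1 - oddH p.+1)
    - (2 ^+ (2 * m))^-1 * ('C(2 * p.+2, p.+2)%:R)^-1 * 'C(2 * p, p)%:R
      * ('C(2 * (m.+1 + p).+1, (m.+1 + p).+1) * 'C((m.+1 + p).+1, m))%N%:R
      * (oddH (m.+1 + p).+1 - oddH p.+2).
Proof.
rewrite /weighted_sum_closed /binom_weight -(addSn m.+1 p) !natrM.
rewrite (bin_central_ratrS _ p.+1) (bin_central_ratrS _ p).
rewrite (@bin_ratr_shift _ _ m) ?(@bin_ratr_shift _ _ m.+1) ?ltn_addr //.
rewrite (_ : m.+2 + p - m = p.+2)%N; last lia.
rewrite (_ : m.+2 + p - m.+1 = p.+1)%N; last lia.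
rewrite [(2 * m.+1)%N]mulnS exprD.
have t0 : 2 ^+ (2 * m) != 0 :> rat by rewrite expf_neq0.
have c0 : 'C(2 * p, p)%:R != 0 :> rat by rewrite pnatr_eq0 -lt0n bin_gt0; lia.
have := ler0n rat m; have := ler0n rat p.
by move=> *; field; rewrite t0 c0 !lt0r_neq0 //; lra.
Qed.

Lemma sum_central_binom_oddH n :
  \sum_(1 <= k < n.+1) (k%:R / 2 ^+ (2 * k) * 'C(2 * k, k)%:R * oddH k)
  = (n * n.+1)%N%:R / 2 ^+ (2 * n + 1) * 'C(2 * n.+1, n.+1)%:R * (oddH n.+1 - 1)
    - (n * n.+1)%N%:R / (3 * 2 ^+ (2 * n)) * 'C(2 * n.+1, n.+1)%:R
      * (oddH n.+1 - 4 / 3).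
Proof.
transitivity (weighted_sum_closed 0 n).
  rewrite -sum_binom_weight_oddH; apply: eq_bigr => k _.
  by rewrite /binom_weight !addn0 binn muln1 oddH0 subr0.
have oddH1 : oddH 1 = 1 by rewrite oddHS oddH0 add0r invr1.
have oddH2 : oddH 2 = 4 / 3 by rewrite oddHS oddH1; field.
rewrite /weighted_sum_closed /binom_weight !addn0 binn muln1 oddH1 oddH2 addn1 exprS.
have t0 : 2 ^+ (2 * n) != 0 :> rat by rewrite expf_neq0.
by field; rewrite t0.
Qed.

Theorem theorem15 :
  (forall n p : nat,
    \sum_(1 <= k < n.+1)
       (k%:R / 2 ^+ (2 * k) * ('C(2 * (k + p), k + p) * 'C(k + p, k))%N%:R
          * (oddH (k + p) - oddH p))
    = n%:R / 2 ^+ (2 * n) * ('C(2 * p.+1, p.+1)%:R)^-1 * 'C(2 * p, p)%:R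
        * ('C(2 * (n + p).+1, (n + p).+1) * 'C((n + p).+1, n))%N%:R
        * (oddH (n + p).+1 - oddH p.+1)
      - ((2 : rat) ^ (2 * (n%:Z) - 2))^-1 * ('C(2 * p.+2, p.+2)%:R)^-1
        * 'C(2 * p, p)%:R
        * ('C(2 * (n + p).+1, (n + p).+1) * binomZ (n + p).+1 (n%:Z - 1))%N%:R
        * (oddH (n + p).+1 - oddH p.+2))
  /\
  (forall n : nat,
    \sum_(1 <= k < n.+1) (k%:R / 2 ^+ (2 * k) * 'C(2 * k, k)%:R * oddH k)
    = (n * n.+1)%N%:R / 2 ^+ (2 * n + 1) * 'C(2 * n.+1, n.+1)%:R
        * (oddH n.+1 - 1)
      - (n * n.+1)%N%:R / (3 * 2 ^+ (2 * n)) * 'C(2 * n.+1, n.+1)%:R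
        * (oddH n.+1 - 4 / 3)).
Proof.
split; last exact: sum_central_binom_oddH.
move=> n p; transitivity (weighted_sum_closed p n); first exact: sum_binom_weight_oddH.
case: n => [|m].
  rewrite (_ : binomZ _ (0%:Z - 1) = 0%N) // /weighted_sum_closed.
  by rewrite !mul0r muln0 mulr0 mul0r subr0.
rewrite (_ : binomZ _ (m.+1%:Z - 1) = 'C((m.+1 + p).+1, m)); last first.
  by rewrite /binomZ (_ : m.+1%:Z - 1 = m%:Z) //; lia.
rewrite (_ : 2 ^ (2 * m.+1%:Z - 2) = 2 ^+ (2 * m)); last first.
  by rewrite (_ : 2 * m.+1%:Z - 2 = (2 * m)%N%:Z) //; lia.
exact: weighted_sum_closed_binomials.
Qed.
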